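(* Let $A$ be a basic connected finite dimensional algebra over an algebraically closed field $k$ with ordinary quiver $Q$ without oriented cycles, and let $\nu\colon kQ\twoheadrightarrow A$ be a presentation. Then $\mathsf{Im}(\theta_\nu)\subseteq\mathsf{HH}^1(A)$ is diagonalizable.
   Context: Fix a complete set $e_1,\dots,e_n$ of primitive orthogonal idempotents of $A$ indexed by $Q_0=\{1,\dots,n\}$, $E=\bigoplus ke_i$, $\mathfrak r$ the radical. A presentation is a surjective algebra map $\nu\colon kQ\twoheadrightarrow A$ with admissible kernel ($(kQ^+)^N\subseteq\mathsf{Ker}\,\nu\subseteq(kQ^+)^2$ for some $N\ge2$, $kQ^+$ the arrow ideal) and $\nu(e_i)=e_i$. $\mathsf{HH}^1(A)=Der_0(A)/Int_0(A)$, with $Der_0(A)$ the derivations vanishing on all $e_i$ (commutator bracket) and $Int_0(A)=\{a\mapsto ea-ae\mid e\in E\}$. Walks: paths in $Q$ with formal inverse arrows allowed. For $I=\mathsf{Ker}\,\nu$, the homotopy relation $\sim_I$ is the smallest equivalence relation on walks with $\alpha\alpha^{-1}\sim_I e_y$, $\alpha^{-1}\alpha\sim_I e_x$ for arrows $\alpha\colon x\to y$, compatible with concatenation, and identifying two paths occurring with nonzero coefficient in a same minimal relation of $I$ (a nonzero $\sum t_iu_i\in I$, $t_i\neq0$, distinct paths $u_i$, no nonempty proper subsum in $I$). $\pi_1(Q,I)$ is the group of classes of closed walks at a fixed vertex $x_0$. Fix a maximal tree $T$ of $Q$, $\gamma_x$ the minimal walk in $T$ from $x_0$ to $x$. For a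 group homomorphism $f\colon\pi_1(Q,I)\to k^+$, $\theta_\nu(f)$ is the class of the derivation $\tilde f$ with $\tilde f(\nu(u))=f([\gamma_y^{-1}u\gamma_x]_I)\nu(u)$ for paths $u$ from $x$ to $y$; $\theta_\nu\colon\mathsf{Hom}(\pi_1(Q,I),k^+)\to\mathsf{HH}^1(A)$. A basis of $A$ is a $k$-basis $\mathcal B\subseteq\bigcup_{i,j}e_jAe_i$ containing $e_1,\dots,e_n$ with the other elements in $\mathfrak r$. A subset $D\subseteq\mathsf{HH}^1(A)$ is diagonalizable if there is a basis $\mathcal B$ of $A$ such that each $f\in D$ is represented by a derivation diagonal with respect to $\mathcal B$. *)

From Stdlib Require Import Relations.
From HB Require Import structures.
From mathcomp Require Import all_boot all_order all_algebra.
From mathcomp Require Import falgebra.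
Set Implicit Arguments. Unset Strict Implicit. Unset Printing Implicit Defensive.
Import GRing.Theory.
Local Open Scope ring_scope.

Section Quiver.
Variables (n : nat) (Arr : finType) (s t : Arr -> 'I_n).

(* A path is given by its source vertex and its list of arrows in the order
   in which they are traversed; the trivial path e_x is (x, [::]). *)
Definition qpath := ('I_n * seq Arr)%type.

Fixpoint arrows_valid (x : 'I_n) (w : seq Arr) : bool :=
  if w is a :: w' then (s a == x) && arrows_valid (t a) w' else true.
Fixpoint arrows_end (x : 'I_n) (w : seq Arr) : 'I_n :=
  if w is a :: w' then arrows_end (t a) w' else x.

Definition path_valid (p : qpath) := arrows_valid p.1 p.2.
Definition path_src (p : qpath) := p.1.
Definition path_tgt (p : qpath) := arrows_end p.1 p.2.

Definition acyclic_quiver : Prop :=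
  forall p : qpath, path_valid p -> path_tgt p = path_src p -> p.2 = [::].

(* Walks: letters are (a, true) = arrow a, (a, false) = formal inverse a^-1.
   A walk is a start vertex together with its letters in traversal order. *)
Definition letter := (Arr * bool)%type.
Definition lsrc (l : letter) := if l.2 then s l.1 else t l.1.
Definition ltgt (l : letter) := if l.2 then t l.1 else s l.1.
Definition linv (l : letter) : letter := (l.1, ~~ l.2).

Fixpoint wvalid (x : 'I_n) (w : seq letter) : bool :=
  if w is l :: w' then (lsrc l == x) && wvalid (ltgt l) w' else true.
Fixpoint wend (x : 'I_n) (w : seq letter) : 'I_n :=
  if w is l :: w' then wend (ltgt l) w' else x.

Definition winv (w : seq letter) : seq letter := rev (map linv w).
Definition fwd (w : seq Arr) : seq letter := map (fun a => (a, true)) w.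

Fixpoint wreduced (w : seq letter) : bool :=
  match w with
  | l :: ((l' :: _) as w') => (l' != linv l) && wreduced w'
  | _ => true
  end.

(* maximal tree T (Q being connected, i.e. a spanning tree): every vertex is
   reached from x0 by a walk in T, and T contains no cycle, i.e. no nonempty
   reduced closed walk using only arrows of T. *)
Definition walk_in (T : {set Arr}) (w : seq letter) := all (fun l => l.1 \in T) w.

Definition maximal_tree (x0 : 'I_n) (T : {set Arr}) : Prop :=
  (forall x : 'I_n, exists w, [/\ wvalid x0 w, wend x0 w = x & walk_in T w]) /\
  (forall x w, wvalid x w -> wend x w = x -> walk_in T w -> wreduced w -> w = [::]).

(* gamma x is the minimal (= reduced) walk in T from x0 to x *)
Definition tree_walks (x0 : 'I_n) (T : {set Arr}) (gamma : 'I_n -> seq letter) :=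
  forall x, [/\ wvalid x0 (gamma x), wend x0 (gamma x) = x,
                walk_in T (gamma x) & wreduced (gamma x)].

Variables (k : fieldType) (A : falgType k).
Variables (e : 'I_n -> A) (a : Arr -> A).

(* nu on the path (x, [a1; ...; am]) is a_m * ... * a_1 (* e_x *) *)
Definition nu_path (p : qpath) : A := foldl (fun acc b => a b * acc) (e p.1) p.2.

Definition nu_comb (r : seq (k * qpath)) : A := \sum_(c <- r) c.1 *: nu_path c.2.

Definition comb_ok (r : seq (k * qpath)) :=
  all (fun c => path_valid c.2) r && uniq (map snd r).

(* The data (e, a) defines an algebra map nu : kQ -> A with nu(e_i) = e_i,
   nu(alpha) = a alpha; it is surjective, with admissible kernel. *)
Definition presentation : Prop :=
  [/\ (* nu is an algebra map: relations of kQ *)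
      [/\ (forall i j, e i * e j = if i == j then e i else 0),
           \sum_i e i = 1 &
           (forall b, e (t b) * a b * e (s b) = a b)],
      (forall x : A, exists r, comb_ok r /\ x = nu_comb r),
      (* (kQ^+)^N \subseteq Ker nu for some N >= 2 *)
      (exists2 N, (2 <= N)%N & forall p, path_valid p -> (N <= size p.2)%N -> nu_path p = 0) &
      (* Ker nu \subseteq (kQ^+)^2 *)
      (forall r, comb_ok r -> nu_comb r = 0 ->
         forall c, c \in r -> (size c.2.2 < 2)%N -> c.1 = 0)].

Definition minimal_relation (r : seq (k * qpath)) : Prop :=
  [/\ r <> [::], comb_ok r, all (fun c => c.1 != 0) r, nu_comb r = 0 &
      forall m : bitseq, size m = size r -> mask m r <> [::] -> mask m r <> r ->
        nu_comb (mask m r) <> 0].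

Inductive hstep : ('I_n * seq letter) -> ('I_n * seq letter) -> Prop :=
  | hstep_cancel x p l q :
      wvalid x (p ++ [:: l; linv l] ++ q) ->
      hstep (x, p ++ [:: l; linv l] ++ q) (x, p ++ q)
  | hstep_rel x p q r u v :
      minimal_relation r -> u \in map snd r -> v \in map snd r ->
      wvalid x (p ++ fwd u.2 ++ q) -> wvalid x (p ++ fwd v.2 ++ q) ->
      hstep (x, p ++ fwd u.2 ++ q) (x, p ++ fwd v.2 ++ q).

Definition homotopic := clos_refl_sym_trans _ hstep.

(* group homomorphisms pi_1(Q, I) -> k^+ at x0, viewed as functions on closed
   walks at x0 that are constant on ~_I-classes and additive *)
Definition pi1_hom (x0 : 'I_n) (f : seq letter -> k) : Prop :=
  (forall w w', wvalid x0 w -> wend x0 w = x0 -> wvalid x0 w' -> wend x0 w' = x0 ->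
      homotopic (x0, w) (x0, w') -> f w = f w') /\
  (forall w w', wvalid x0 w -> wend x0 w = x0 -> wvalid x0 w' -> wend x0 w' = x0 ->
      f (w ++ w') = f w + f w').

(* tf is the derivation \tilde f : tf(nu(u)) = f([gamma_y^-1 u gamma_x]) nu(u)
   (walks are written in traversal order: first gamma_x, then u, then gamma_y^-1) *)
Definition tilde_of (gamma : 'I_n -> seq letter) (f : seq letter -> k) (tf : A -> A) :=
  forall p : qpath, path_valid p ->
    tf (nu_path p) = f (gamma (path_src p) ++ fwd p.2 ++ winv (gamma (path_tgt p))) *: nu_path p.

End Quiver.

Section AlgebraSide.
Variables (k : fieldType) (A : falgType k) (n : nat) (e : 'I_n -> A).

Definition is_linear_map (D : A -> A) : Prop :=
  forall (c : k) (x y : A), D (c *: x + y) = c *: D x + D y.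

Definition der0 (D : A -> A) : Prop :=
  [/\ is_linear_map D, (forall x y, D (x * y) = D x * y + x * D y) &
      forall i, D (e i) = 0].

Definition int0 (D : A -> A) : Prop :=
  exists c : 'I_n -> k, let eps := \sum_i c i *: e i in
    forall x, D x = eps * x - x * eps.

Definition in_radical (x : A) : Prop := forall y : A, (1 - y * x) \is a GRing.unit.

Definition adapted_basis (B : seq A) : Prop :=
  [/\ basis_of fullv B,
      (forall b, b \in B -> exists i j, e j * b * e i = b),
      (forall i, e i \in B) &
      (forall b, b \in B -> (forall i, b != e i) -> in_radical b)].

Definition diagonal_wrt (B : seq A) (D : A -> A) : Prop :=
  forall b, b \in B -> exists c : k, D b = c *: b.

End AlgebraSide.

From HB Require Import structures.
From mathcomp Require Import all_boot all_order all_algebra.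
From mathcomp Require Import falgebra.
From Stdlib Require Import Relations.
Set Implicit Arguments. Unset Strict Implicit. Unset Printing Implicit Defensive.
Import GRing.Theory.
Local Open Scope ring_scope.

(* The representative [tf] of theta_nu(f) is itself a derivation.  On the image
   of a path u from x to y it is the scalar f([gamma_y^-1 u gamma_x]); these
   scalars add along concatenation because gamma_z gamma_z^-1 is null-homotopic
   at the middle vertex z, so the Leibniz rule holds on path images, hence
   everywhere as nu is onto.  As [tf] is diagonal on every path image, it
   remains to find a basis of A consisting of the e_i and of images of paths:
   extend the free family of orthogonal idempotents e_i by path images spanning
   A.  Images of paths of positive length are in the radical because, by
   admissibility, the image of the arrow ideal is nilpotent. *)

Section LinearMap.
Variables (k : fieldType) (A : falgType k) (L : A -> A).
Hypothesis L_lin : is_linear_map L.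

Lemma lin_mapD x y : L (x + y) = L x + L y.
Proof. by have := L_lin 1 x y; rewrite !scale1r. Qed.

Lemma lin_map0 : L 0 = 0.
Proof. by apply: (@addrI _ (L 0)); rewrite -lin_mapD !addr0. Qed.

Lemma lin_mapZ c x : L (c *: x) = c *: L x.
Proof. by have := L_lin c x 0; rewrite !addr0 lin_map0 addr0. Qed.

Lemma lin_map_comb (I : Type) (r : seq (k * I)) (F : I -> A) :
  L (\sum_(c <- r) c.1 *: F c.2) = \sum_(c <- r) c.1 *: L (F c.2).
Proof.
elim: r => [|c r IH]; first by rewrite !big_nil lin_map0.
by rewrite !big_cons lin_mapD lin_mapZ IH.
Qed.

Definition leibniz_defect x y := L (x * y) - (L x * y + x * L y).

Lemma leibniz_defect_linear x : is_linear_map (leibniz_defect x).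
Proof.
move=> c y z; rewrite /leibniz_defect !mulrDr -!scalerAr !lin_mapD !lin_mapZ.
by rewrite mulrDr -scalerAr addrACA -scalerDr opprD addrACA -scalerBr.
Qed.

Lemma leibniz_defect_linear_l y : is_linear_map (leibniz_defect ^~ y).
Proof.
move=> c x z; rewrite /leibniz_defect mulrDl -scalerAl !lin_mapD !lin_mapZ.
by rewrite !mulrDl -!scalerAl addrACA -scalerDr opprD addrACA -scalerBr.
Qed.

End LinearMap.

Lemma unit_1B_nilpotent (R : unitRingType) (x : R) m : x ^+ m = 0 -> (1 - x) \is a GRing.unit.
Proof.
move=> xm0; apply/unitrP; exists (\sum_(i < m) x ^+ i).
have xinv : (1 - x) * (\sum_(i < m) x ^+ i) = 1.
  by rewrite -opprB mulNr -subrX1 xm0 sub0r opprK.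
split=> //; rewrite -[RHS]xinv; apply/esym/commr_sum => i _.
by apply: commrX; apply: commr_sym; apply: commrB; [apply: commr1 | apply: commr_refl].
Qed.

Lemma free_extension (K : fieldType) (V : vectType K) (Y X : seq V) : free X ->
  exists B : seq V, [/\ free B, {subset X <= B}, {subset B <= X ++ Y} &
                        {subset Y <= <<B>>%VS}].
Proof.
elim: Y X => [|y Y IH] X freeX; first by exists X; rewrite cats0; split.
have [yX | yNX] := boolP (y \in <<X>>%VS).
  have [B [freeB XB BXY YB]] := IH X freeX.
  exists B; split=> //.
  - by move=> b /BXY; rewrite !mem_cat inE => /orP[|] ->; rewrite ?orbT.
  - by move=> z; rewrite inE => /orP[/eqP ->|/YB //]; apply: subvP (sub_span XB) _ yX.
have [|B [freeB yXB BXY YB]] := IH (y :: X); first by rewrite free_cons yNX.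
exists B; split=> //.
- by move=> b bX; apply: yXB; rewrite inE bX orbT.
- by move=> b /BXY; rewrite !mem_cat !inE -orbA orbCA.
- by move=> z; rewrite inE => /orP[/eqP ->|/YB //]; apply/memv_span/yXB/mem_head.
Qed.

Lemma free_orthogonal_idempotents (K : fieldType) (A : falgType K) (I : eqType) (e : I -> A) :
  (forall i j, e i * e j = if i == j then e i else 0) -> (forall i, e i != 0) ->
  forall r : seq I, uniq r -> free (map e r).
Proof.
move=> e_mul e_neq0; elim=> [|i r IH] /=; first by rewrite nil_free.
case/andP => ir /IH freer; rewrite free_cons freer andbT; apply/negP => ei_r.
have : (<<map e r>> <= lker (amull (e i)))%VS.
  apply/span_subvP => _ /mapP[j jr ->]; rewrite memv_ker lfunE /= e_mul.
  by case: (i =P j) jr ir => [-> -> //|].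
move/subvP/(_ _ ei_r); rewrite memv_ker lfunE /= e_mul eqxx.
exact/negP/e_neq0.
Qed.

Section Quiver.
Variables (n : nat) (Arr : finType) (s t : Arr -> 'I_n).

Local Notation wvalid := (wvalid s t).
Local Notation wend := (wend s t).

Lemma wvalid_cat x u v : wvalid x (u ++ v) = wvalid x u && wvalid (wend x u) v.
Proof. by elim: u x => [|l u IH] x //=; rewrite IH andbA. Qed.

Lemma wend_cat x u v : wend x (u ++ v) = wend (wend x u) v.
Proof. by elim: u x => [|l u IH] x /=. Qed.

Lemma winv_rcons (w : seq (letter Arr)) l : winv (rcons w l) = linv l :: winv w.
Proof. by rewrite /winv map_rcons rev_rcons. Qed.

Lemma winvK : involutive (@winv Arr).
Proof.
by move=> w; rewrite /winv map_rev revK -map_comp map_id_in // => -[b c] _; rewrite /linv /= negbK.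
Qed.

Lemma ltgt_linv (l : letter Arr) : ltgt s t (linv l) = lsrc s t l.
Proof. by rewrite /ltgt /lsrc /linv; case: l.2. Qed.

Lemma wvalid_winv x w :
  wvalid x w -> wvalid (wend x w) (winv w) /\ wend (wend x w) (winv w) = x.
Proof.
elim/last_ind: w => [|w l IH] //=.
rewrite -cats1 wvalid_cat wend_cat /= andbT => /andP[/IH[vw ew] /eqP sl].
rewrite cats1 winv_rcons /= ltgt_linv sl vw ew andbT; split=> //.
by rewrite /lsrc /ltgt /linv; case: l.2.
Qed.

Lemma fwd_cat (u v : seq Arr) : fwd (u ++ v) = fwd u ++ fwd v.
Proof. exact: map_cat. Qed.

Lemma wvalid_fwd x w : wvalid x (fwd w) = arrows_valid s t x w.
Proof. by elim: w x => [|b w IH] x //=; rewrite IH. Qed.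

Lemma wend_fwd x w : wend x (fwd w) = arrows_end t x w.
Proof. by elim: w x => [|b w IH] x /=. Qed.

Lemma arrows_valid_cat x u v :
  arrows_valid s t x (u ++ v) = arrows_valid s t x u && arrows_valid s t (arrows_end t x u) v.
Proof. by elim: u x => [|b u IH] x //=; rewrite IH andbA. Qed.

Lemma arrows_end_cat x u v : arrows_end t x (u ++ v) = arrows_end t (arrows_end t x u) v.
Proof. by elim: u x => [|b u IH] x /=. Qed.

Lemma path_valid_cat p q : path_valid s t p -> path_valid s t q ->
  path_src p = path_tgt t q -> path_valid s t (q.1, q.2 ++ p.2).
Proof.
move=> pv qv pq.
by rewrite /path_valid arrows_valid_cat [arrows_valid _ _ _ _]qv -[arrows_end _ _ _]pq.
Qed.

Lemma path_tgt_cat p q : path_src p = path_tgt t q -> path_tgt t (q.1, q.2 ++ p.2) = path_tgt t p.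
Proof. by move=> pq; rewrite /path_tgt arrows_end_cat -[arrows_end _ _ q.2]pq. Qed.

Variables (k : fieldType) (A : falgType k) (e : 'I_n -> A) (a : Arr -> A).

Local Notation homotopic := (homotopic s t e a).
Local Notation nu := (nu_path e a).

Lemma homotopic_cancel x p g q :
  wvalid x (p ++ g ++ winv g ++ q) -> homotopic (x, p ++ g ++ winv g ++ q) (x, p ++ q).
Proof.
elim/last_ind: g p q => [|g l IH] p q; first by move=> _; apply: rst_refl.
have -> : p ++ rcons g l ++ winv (rcons g l) ++ q = (p ++ g) ++ [:: l; linv l] ++ (winv g ++ q).
  by rewrite winv_rcons -cats1 -!catA.
move=> v; apply: rst_trans; first by apply: rst_step; apply: hstep_cancel v.
rewrite -catA; apply: IH; move: v.
rewrite !wvalid_cat !wend_cat /= ltgt_linv.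
by case/and4P => /andP[-> ->] /and3P[/eqP -> _ _] -> ->.
Qed.

Section TreeLoops.
Variables (x0 : 'I_n) (gamma : 'I_n -> seq (letter Arr)) (f : seq (letter Arr) -> k).
Hypothesis f_hom : pi1_hom s t e a x0 f.
Hypothesis gamma_walk : forall x, wvalid x0 (gamma x) /\ wend x0 (gamma x) = x.

Definition tree_loop (p : qpath n Arr) :=
  gamma (path_src p) ++ fwd p.2 ++ winv (gamma (path_tgt t p)).

Lemma pi1_hom_nil : f [::] = 0.
Proof.
have := f_hom.2 [::] [::] erefl erefl erefl erefl.
by rewrite -[LHS]addr0 => /addrI.
Qed.

Lemma tree_loop_closed p : path_valid s t p ->
  wvalid x0 (tree_loop p) /\ wend x0 (tree_loop p) = x0.
Proof.
move=> pv; rewrite /tree_loop !wvalid_cat !wend_cat.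
have [vs ->] := gamma_walk (path_src p); have [vt et] := gamma_walk (path_tgt t p).
have [] := wvalid_winv vt; rewrite et wvalid_fwd wend_fwd => -> ->.
by rewrite vs [arrows_valid _ _ _ _]pv.
Qed.

Lemma tree_loop_trivial x : f (tree_loop (x, [::])) = 0.
Proof.
have [vx ex] := gamma_walk x; have [vi ei] := wvalid_winv vx; rewrite ex in vi ei.
have v : wvalid x0 ([::] ++ gamma x ++ winv (gamma x) ++ [::]).
  by rewrite /= cats0 wvalid_cat vx ex vi.
have h := homotopic_cancel v; rewrite /= cats0 in v h.
rewrite -pi1_hom_nil; apply: f_hom.1 h => //.
by rewrite wend_cat ex ei.
Qed.

Lemma tree_loop_cat p q : path_valid s t p -> path_valid s t q -> path_src p = path_tgt t q ->
  f (tree_loop (q.1, q.2 ++ p.2)) = f (tree_loop q) + f (tree_loop p).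
Proof.
move=> pv qv pq.
have [vp ep] := tree_loop_closed pv; have [vq q_end] := tree_loop_closed qv.
have [vqp eqp] := tree_loop_closed (path_valid_cat pv qv pq).
have vcat : wvalid x0 (tree_loop q ++ tree_loop p) by rewrite wvalid_cat vq q_end.
rewrite -f_hom.2 //; apply: f_hom.1 => //; first by rewrite wend_cat q_end.
set g := winv (gamma (path_tgt t q)).
have loops_cat : tree_loop q ++ tree_loop p =
          (gamma (path_src q) ++ fwd q.2) ++ g ++ winv g ++ fwd p.2 ++ winv (gamma (path_tgt t p)).
  by rewrite winvK /tree_loop pq -!catA.
rewrite loops_cat in vcat *.
have -> : tree_loop (q.1, q.2 ++ p.2) =
          (gamma (path_src q) ++ fwd q.2) ++ fwd p.2 ++ winv (gamma (path_tgt t p)).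
  by rewrite /tree_loop (path_tgt_cat pq) fwd_cat -!catA.
by apply/rst_sym/homotopic_cancel.
Qed.
End TreeLoops.

Lemma vertex_idempotent_neq0 :
  (forall r, comb_ok s t r -> nu_comb e a r = 0 ->
     forall c, c \in r -> (size c.2.2 < 2)%N -> c.1 = 0) ->
  forall i, e i != 0.
Proof.
move=> ker_rad i; apply/eqP => ei0.
have := ker_rad [:: (1, (i, [::]))] erefl _ _ (mem_head _ _) erefl.
by rewrite /nu_comb big_seq1 scale1r /nu_path /= ei0 => /(_ erefl) /eqP; rewrite oner_eq0.
Qed.

Section PathAlgebra.
Hypothesis e_mul : forall i j, e i * e j = if i == j then e i else 0.
Hypothesis e_arrow : forall b, e (t b) * a b * e (s b) = a b.

Definition arrow_prod (w : seq Arr) := foldl (fun acc b => a b * acc) 1 w.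

Lemma foldl_arrow_prod c w : foldl (fun acc b => a b * acc) c w = arrow_prod w * c.
Proof.
rewrite /arrow_prod; elim: w c => [|b w IH] c /=; first by rewrite mul1r.
by rewrite IH (IH (a b * 1)) mulr1 mulrA.
Qed.

Lemma arrow_prod_cons b w : arrow_prod (b :: w) = arrow_prod w * a b.
Proof. by rewrite /arrow_prod /= foldl_arrow_prod mulr1. Qed.

Lemma nu_pathE p : nu p = arrow_prod p.2 * e p.1.
Proof. exact: foldl_arrow_prod. Qed.

Lemma e_idem i : e i * e i = e i.
Proof. by rewrite e_mul eqxx. Qed.

Lemma nu_path_src p : nu p * e (path_src p) = nu p.
Proof. by rewrite nu_pathE -mulrA e_idem. Qed.

Lemma nu_path_tgt p : path_valid s t p -> e (path_tgt t p) * nu p = nu p.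
Proof.
case: p => x w; rewrite /path_valid /path_tgt !nu_pathE /=.
elim: w x => [|b w IH] x /=; first by rewrite mul1r e_idem.
move=> /andP[/eqP <- /IH ew].
by rewrite arrow_prod_cons -e_arrow !mulrA -[e _ * _ * e (t b)]mulrA ew.
Qed.

Lemma nu_path_mul p q : path_valid s t p -> path_valid s t q ->
  nu p * nu q = if path_src p == path_tgt t q then nu (q.1, q.2 ++ p.2) else 0.
Proof.
move=> pv qv.
rewrite -nu_path_src -(nu_path_tgt qv) -mulrA (mulrA (e _)) e_mul.
case: eqP => [pq|_]; last by rewrite mul0r mulr0.
rewrite [nu (_, _)]/nu_path foldl_cat foldl_arrow_prod -/(nu q) (nu_pathE p) -/(path_src p) pq.
by rewrite -mulrA !(nu_path_tgt qv).
Qed.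

Hypothesis nu_surj : forall x : A, exists r, comb_ok s t r /\ x = nu_comb e a r.

Lemma lin_map_eq0_on_paths (L : A -> A) : is_linear_map L ->
  (forall p, path_valid s t p -> L (nu p) = 0) -> forall x, L x = 0.
Proof.
move=> L_lin L_paths x; have [r [/andP[rv _] ->]] := nu_surj x.
rewrite /nu_comb lin_map_comb // big_seq big1 // => c /(allP rv) cv.
by rewrite L_paths ?scaler0.
Qed.

Lemma paths_span_seq (X : seq A) :
  exists S, all (path_valid s t) S /\ {subset X <= <<map nu S>>%VS}.
Proof.
elim: X => [|x X [S [Sv XS]]]; first by exists [::].
have [r [/andP[rv _] ->]] := nu_surj x.
exists (map snd r ++ S); split; first by rewrite all_cat Sv andbT all_map.
move=> y; rewrite inE map_cat => /orP[/eqP ->|/XS yS]; last first.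
  by apply: subvP (sub_span _) _ yS => z zS; rewrite mem_cat zS orbT.
rewrite /nu_comb big_seq; apply: memv_suml => c cr.
by apply: memvZ; apply: memv_span; rewrite mem_cat map_f // map_f.
Qed.

Section TildeDerivation.
Variables (x0 : 'I_n) (gamma : 'I_n -> seq (letter Arr)) (f : seq (letter Arr) -> k).
Variable tf : A -> A.
Hypothesis f_hom : pi1_hom s t e a x0 f.
Hypothesis gamma_walk : forall x, wvalid x0 (gamma x) /\ wend x0 (gamma x) = x.
Hypotheses (tf_lin : is_linear_map tf) (tf_tilde : tilde_of s t e a gamma f tf).

Lemma tilde_leibniz_paths p q : path_valid s t p -> path_valid s t q ->
  leibniz_defect tf (nu p) (nu q) = 0.
Proof.
move=> pv qv; apply/eqP; rewrite subr_eq0 !tf_tilde // -scalerAl -scalerAr -scalerDl.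
apply/eqP; rewrite nu_path_mul //; case: eqP => pq; last by rewrite lin_map0 // scaler0.
by rewrite tf_tilde ?path_valid_cat // (tree_loop_cat f_hom gamma_walk) // addrC.
Qed.

Lemma tilde_der0 : der0 e tf.
Proof.
split=> // [x y | i].
  apply/subr0_eq.
  apply: (lin_map_eq0_on_paths (leibniz_defect_linear_l tf_lin y)) => p pv.
  apply: (lin_map_eq0_on_paths (leibniz_defect_linear tf_lin _)) => q qv.
  exact: tilde_leibniz_paths.
have := @tf_tilde (i, [::]) erefl; rewrite /nu_path /= => ->.
by rewrite (tree_loop_trivial f_hom gamma_walk) scale0r.
Qed.

End TildeDerivation.

Section Radical.
Variable N : nat.
Hypothesis long_paths0 : forall p, path_valid s t p -> (N <= size p.2)%N -> nu p = 0.

Inductive in_arrow_pow (m : nat) : A -> Prop :=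
| arrow_pow0 : in_arrow_pow m 0
| arrow_pow_cons c p z : path_valid s t p -> (m <= size p.2)%N ->
    in_arrow_pow m z -> in_arrow_pow m (c *: nu p + z).

Lemma in_arrow_pow_mono m1 m2 u : (m1 <= m2)%N -> in_arrow_pow m2 u -> in_arrow_pow m1 u.
Proof.
move=> m12; elim=> [|c p z pv pm _ IH]; first exact: arrow_pow0.
by apply: arrow_pow_cons => //; apply: leq_trans pm.
Qed.

Lemma in_arrow_powD m u v : in_arrow_pow m u -> in_arrow_pow m v -> in_arrow_pow m (u + v).
Proof.
elim=> [|c p z pv pm _ IH] vm; first by rewrite add0r.
by rewrite -addrA; apply: arrow_pow_cons => //; apply: IH.
Qed.

Lemma in_arrow_powZ m c u : in_arrow_pow m u -> in_arrow_pow m (c *: u).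
Proof.
elim=> [|d p z pv pm _ IH]; first by rewrite scaler0; apply: arrow_pow0.
by rewrite scalerDr scalerA; apply: arrow_pow_cons.
Qed.

Lemma in_arrow_pow_path p : path_valid s t p -> in_arrow_pow (size p.2) (nu p).
Proof.
by move=> pv; rewrite -[nu p]addr0 -[nu p]scale1r; apply: arrow_pow_cons => //; apply: arrow_pow0.
Qed.

Lemma in_arrow_pow_comb r : all (fun c => path_valid s t c.2) r -> in_arrow_pow 0 (nu_comb e a r).
Proof.
rewrite /nu_comb; elim: r => [|c r IH] /=; first by rewrite big_nil => _; apply: arrow_pow0.
by case/andP => cv rv; rewrite big_cons; apply: arrow_pow_cons => //; apply: IH.
Qed.

Lemma in_arrow_pow_path_mul p m z : path_valid s t p -> in_arrow_pow m z ->
  in_arrow_pow (m + size p.2) (nu p * z).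
Proof.
move=> pv; elim=> [|c q z' qv qm _ IH]; first by rewrite mulr0; apply: arrow_pow0.
rewrite mulrDr -scalerAr nu_path_mul //; case: eqP => pq; last by rewrite scaler0 add0r.
by apply: arrow_pow_cons => //; [apply: path_valid_cat | rewrite size_cat leq_add2r].
Qed.

Lemma in_arrow_powM m1 m2 u v :
  in_arrow_pow m1 u -> in_arrow_pow m2 v -> in_arrow_pow (m1 + m2) (u * v).
Proof.
move=> + vm; elim=> [|c p z pv pm _ IH]; first by rewrite mul0r; apply: arrow_pow0.
rewrite mulrDl -scalerAl; apply: in_arrow_powD => //; apply: in_arrow_powZ.
by apply: in_arrow_pow_mono (in_arrow_pow_path_mul pv vm); rewrite addnC leq_add2l.
Qed.

Lemma in_arrow_pow_eq0 u : in_arrow_pow N u -> u = 0.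
Proof. by elim=> [|c p z pv pm _ ->] //; rewrite long_paths0 // scaler0 addr0. Qed.

Lemma nu_path_radical p : path_valid s t p -> (0 < size p.2)%N -> in_radical (nu p).
Proof.
move=> pv p_gt0 y; apply: (@unit_1B_nilpotent _ _ N); apply: in_arrow_pow_eq0.
have [r [/andP[rv _] ->]] := nu_surj y.
set x := nu_comb e a r * nu p.
have x1 : in_arrow_pow 1 x.
  apply: in_arrow_powM 0 1 _ _ (in_arrow_pow_comb rv) _.
  exact: in_arrow_pow_mono p_gt0 (in_arrow_pow_path pv).
have one0 : in_arrow_pow 0 1.
  by have [r1 [/andP[r1v _] ->]] := nu_surj 1; apply: in_arrow_pow_comb.
elim: N => [|j IH]; first by rewrite expr0.
by rewrite exprS; apply: in_arrow_powM 1 j _ _ x1 IH.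
Qed.

Lemma adapted_basis_of_paths B : basis_of fullv B -> (forall i, e i \in B) ->
  (forall b, b \in B -> exists2 p, path_valid s t p & b = nu p) -> adapted_basis e B.
Proof.
move=> Bbasis eB Bpaths; split=> //.
  move=> b /Bpaths[p pv ->]; exists (path_src p), (path_tgt t p).
  by rewrite (nu_path_tgt pv) nu_path_src.
move=> b /Bpaths[[x [|c w]] pv ->] p_ne_e; last exact: nu_path_radical.
by have := p_ne_e x; rewrite /nu_path eqxx.
Qed.

End Radical.

End PathAlgebra.
End Quiver.

Theorem proposition2p4
  (k : closedFieldType) (A : falgType k)
  (n : nat) (Arr : finType) (s t : Arr -> 'I_n)
  (e : 'I_n -> A) (a : Arr -> A)
  (x0 : 'I_n) (T : {set Arr}) (gamma : 'I_n -> seq (Arr * bool)) :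
  acyclic_quiver s t ->
  presentation s t e a ->
  maximal_tree s t x0 T ->
  tree_walks s t x0 T gamma ->
  exists B : seq A, adapted_basis e B /\
    forall f : seq (Arr * bool) -> k, pi1_hom s t e a x0 f ->
    forall tf : A -> A, is_linear_map tf -> tilde_of s t e a gamma f tf ->
    exists D : A -> A, [/\ der0 e D, diagonal_wrt B D &
                          int0 e (fun x => tf x - D x)].
Proof.
move=> _ [[e_mul _ e_arrow] nu_surj [N _ long_paths0] ker_rad] _ tree.
have gamma_walk x : wvalid s t x0 (gamma x) /\ wend s t x0 (gamma x) = x.
  by case: (tree x).
have [S [Sv SA]] := paths_span_seq nu_surj (vbasis fullv).
have [B [Bfree eB BeS SB]] := free_extension (map (nu_path e a) S)
  (free_orthogonal_idempotents e_mul (vertex_idempotent_neq0 ker_rad) (enum_uniq 'I_n)).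
have Bpaths b : b \in B -> exists2 p, path_valid s t p & b = nu_path e a p.
  move/BeS; rewrite mem_cat => /orP[/mapP[i _ ->]|/mapP[p /(allP Sv) pv ->]].
  - by exists (i, [::]).
  - by exists p.
have Bbasis : basis_of fullv B.
  rewrite /basis_of Bfree andbT eqEsubv subvf /= -(span_basis (vbasisP fullv)).
  have SspanB : (<<map (nu_path e a) S>> <= <<B>>)%VS by apply/span_subvP.
  by apply/span_subvP => x /SA; apply: subvP SspanB x.
exists B; split.
  by apply: adapted_basis_of_paths long_paths0 _ _ _ _ => // i; apply/eB/map_f/mem_enum.
move=> f f_hom tf tf_lin tf_tilde; exists tf; split.
- exact: tilde_der0 f_hom gamma_walk tf_lin tf_tilde.
- by move=> b /Bpaths[p pv ->]; exists (f (tree_loop t gamma p)); apply: tf_tilde.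
- exists (fun=> 0) => /= x; rewrite subrr big1 ?mul0r ?mulr0 ?subrr // => i _.
  exact: scale0r.
Qed.
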